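(* Let $k\ge60$, $1\le r\le k/60$, $\varepsilon\in(0,1]$. Let $\Lambda_0$ be a probability distribution over pairs $(P,P)$ of distributions on $[n]$, and $\Lambda_{\mathrm{alt}}$ a probability distribution over pairs $(P_1,P_2)$ of distributions on $[n]$ with $\mathrm{d_{TV}}(P_1,P_2)\ge\varepsilon$. Let $A$ be a randomized (possibly adaptive) algorithm that always draws at most $T$ samples in total from $k$ distributions $D_1,\dots,D_k$, and that, whenever $(P_1,P_2)$ is in the support of $\Lambda_{\mathrm{alt}}$ and $I\subseteq[k]$, $|I|=r$, and $D_i=P_2$ for $i\in I$, $D_i=P_1$ for $i\notin I$, outputs an index in $I$ with probability at least $0.9$. Then there exists an algorithm $A'$ which, given sample access to a pair $(P_1,P_2)$ drawn either from $\Lambda_0$ or from $\Lambda_{\mathrm{alt}}$, draws at most $T$ samples from $P_1$ and at most $60rT/k$ samples from $P_2$, and correctly decides which of the two ($\Lambda_0$ or $\Lambda_{\mathrm{alt}}$) the pair was drawn from with probability at least $0.9$ in each case (probability over the pair, the samples and all internal randomness).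
   Context: $\mathrm{d_{TV}}$ is total variation distance. Sample access means independent samples can be requested adaptively. *)

From HB Require Import structures.
From mathcomp Require Import all_boot all_order all_algebra.
From mathcomp Require Import all_classical all_reals all_analysis.
Set Implicit Arguments. Unset Strict Implicit. Unset Printing Implicit Defensive.
Import Order.TTheory GRing.Theory Num.Theory.
Local Open Scope ring_scope.

Definition is_dist (R : numDomainType) (n : nat) (p : 'I_n -> R) : Prop :=
  (forall x, 0 <= p x) /\ \sum_(x < n) p x = 1.

Definition dTV (R : numFieldType) (n : nat) (p q : 'I_n -> R) : R :=
  2^-1 * \sum_(x < n) `|p x - q x|.

(* A randomized adaptive sampling algorithm (decision tree) with oracles
   indexed by O, samples in 'I_n, outputs in Out:
   - Ret o : stop and output o;
   - Samp i f : draw one sample x from oracle i, continue with f x;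
   - Rand m w f : internal randomness, pick j : 'I_m with probability w j,
     continue with f j. *)
Inductive alg (R : Type) (n : nat) (O Out : Type) : Type :=
| Ret : Out -> alg R n O Out
| Samp : O -> ('I_n -> alg R n O Out) -> alg R n O Out
| Rand : forall m : nat, ('I_m -> R) -> ('I_m -> alg R n O Out) -> alg R n O Out.

Arguments Ret {R n O Out}.
Arguments Samp {R n O Out}.
Arguments Rand {R n O Out}.

Fixpoint alg_wf (R : numDomainType) n O Out (a : alg R n O Out) : Prop :=
  match a with
  | Ret _ => True
  | Samp _ f => forall x, alg_wf (f x)
  | Rand m w f => (forall j, 0 <= w j) /\ \sum_(j < m) w j = 1 /\
                  forall j, alg_wf (f j)
  end.

Fixpoint qbound (R : Type) n O Out (a : alg R n O Out) (S : pred O) (t : nat)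
  : Prop :=
  match a with
  | Ret _ => True
  | Samp o f => if S o then (0 < t)%N /\ forall x, qbound (f x) S t.-1
                else forall x, qbound (f x) S t
  | Rand m w f => forall j, qbound (f j) S t
  end.

Fixpoint prob_out (R : numDomainType) n O Out (a : alg R n O Out)
  (D : O -> 'I_n -> R) (good : pred Out) : R :=
  match a with
  | Ret o => if good o then 1 else 0
  | Samp i f => \sum_(x < n) D i x * prob_out (f x) D good
  | Rand m w f => \sum_(j < m) w j * prob_out (f j) D good
  end.

From HB Require Import structures.
From mathcomp Require Import all_boot all_order all_algebra.
From mathcomp Require Import all_classical all_reals all_analysis.
From mathcomp Require Import lra ring.
From mathcomp Require Import perm.
Import Order.TTheory GRing.Theory Num.Theory.
Set Implicit Arguments. Unset Strict Implicit. Unset Printing Implicit Defensive.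
Local Open Scope ring_scope.

(* A' draws a uniformly random r-subset I of the k oracles and runs A,
   answering queries to oracles in I with samples of P2 and all other queries
   with samples of P1; it answers "alternative" iff A outputs an index in I, and
   also as soon as A asks for more than 60rT/k samples from I.  Under the
   alternative this cut-off only helps, so A' succeeds whenever A does.  Under
   the null all k oracles equal P, so by symmetry the run of A does not depend
   on I: its output lies in I with probability r/k, and it draws on average at
   most rT/k samples from I, so by Markov's inequality the budget is exceeded
   with probability at most 1/60. *)

Lemma qbound_le (R : Type) n O Out (a : alg R n O Out) (S : pred O) (t t' : nat) :
  (t <= t')%N -> qbound a S t -> qbound a S t'.
Proof.
elim: a t t' => [ o | i f IH | m w f IH] t t' le_tt' /=;
  [by [] | | by move=> h j; exact: IH (h j)].
case: (S i) => [[t_gt0 h]|h x]; last exact: IH (h x).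
split=> [|x]; first exact: leq_trans le_tt'.
by apply: IH (h x); rewrite -!subn1 leq_sub2r.
Qed.

Lemma convex_comb_le (R : numDomainType) m (q s : 'I_m -> R) (c : R) :
  (forall j, 0 <= q j) -> \sum_(j < m) q j = 1 -> (forall j, s j <= c) ->
  \sum_(j < m) q j * s j <= c.
Proof.
move=> q_ge0 q1 s_le; rewrite -[leRHS]mul1r -q1 mulr_suml.
by apply: ler_sum => j _; rewrite ler_wpM2l.
Qed.

Section AlgTheory.
Variables (R : numDomainType) (n : nat) (O Out : Type).
Implicit Types (a : alg R n O Out) (D : O -> 'I_n -> R).

Fixpoint expected_queries a D (S : pred O) : R :=
  match a with
  | Ret _ => 0
  | Samp i f => (S i)%:R + \sum_(x < n) D i x * expected_queries (f x) D S
  | Rand m w f => \sum_(j < m) w j * expected_queries (f j) D S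
  end.

Lemma prob_out_ge0 a D (g : pred Out) :
  alg_wf a -> (forall i x, 0 <= D i x) -> 0 <= prob_out a D g.
Proof.
move=> + D_ge0; elim: a => [ o | i f IH | m w f IH] /=; first by case: (g o).
  by move=> wf; apply: sumr_ge0 => x _; rewrite mulr_ge0 ?IH.
by move=> [w_ge0 [_ wf]]; apply: sumr_ge0 => j _; rewrite mulr_ge0 ?IH.
Qed.

Lemma expected_queries_ge0 a D (S : pred O) :
  alg_wf a -> (forall i x, 0 <= D i x) -> 0 <= expected_queries a D S.
Proof.
move=> + D_ge0; elim: a => [ o | i f IH | m w f IH] //=.
  by move=> wf; rewrite addr_ge0 //; apply: sumr_ge0 => x _; rewrite mulr_ge0 ?IH.
by move=> [w_ge0 [_ wf]]; apply: sumr_ge0 => j _; rewrite mulr_ge0 ?IH.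
Qed.

Lemma prob_out_le1 a D (g : pred Out) :
  alg_wf a -> (forall i, is_dist (D i)) -> prob_out a D g <= 1.
Proof.
move=> + hD; elim: a => [ o | i f IH | m w f IH] /=; first by case: (g o).
  by move=> wf; have [D_ge0 D1] := hD i; apply: convex_comb_le => // x; exact: IH.
by move=> [w_ge0 [w1 wf]]; apply: convex_comb_le => // j; exact: IH.
Qed.

Lemma prob_outT a D : alg_wf a -> (forall i, is_dist (D i)) -> prob_out a D predT = 1.
Proof.
move=> + hD; elim: a => [ o | i f IH | m w f IH] //=.
  move=> wf; have [_ <-] := hD i.
  by apply: eq_bigr => x _; rewrite IH ?mulr1.
move=> [_ [<- wf]].
by apply: eq_bigr => j _; rewrite IH ?mulr1.
Qed.

Lemma expected_queries_le a D (t : nat) :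
  alg_wf a -> (forall i, is_dist (D i)) -> qbound a predT t ->
  expected_queries a D predT <= t%:R.
Proof.
move=> + hD; elim: a t => [ o | i f IH | m w f IH] t /=; first by rewrite ler0n.
  move=> wf [t_gt0 h]; have [D_ge0 D1] := hD i.
  rewrite -(prednK t_gt0) -[t.-1.+1%:R]natr1 [leRHS]addrC lerD2l.
  by apply: convex_comb_le => // x; exact: IH.
by move=> [w_ge0 [w1 wf]] h; apply: convex_comb_le => // j; exact: IH.
Qed.

End AlgTheory.

Section Averaging.
Variables (R : numDomainType) (n k : nat) (Sf : {set {set 'I_k}}) (N : nat).
Hypothesis card_mem : forall o, #|[set I in Sf | o \in I]| = N.

Lemma sum_mem_indicator (o : 'I_k) : \sum_(I in Sf) (if o \in I then 1 else 0 : R) = N%:R.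
Proof.
rewrite -big_mkcondr -(card_mem o) -sumr_const.
by apply: eq_bigl => I; rewrite inE.
Qed.

Lemma sum_prob_out_mem O (a : alg R n O 'I_k) D :
  \sum_(I in Sf) prob_out a D (fun j => j \in I) = N%:R * prob_out a D predT.
Proof.
elim: a => [ o | i f IH | m w f IH] /=; first by rewrite sum_mem_indicator mulr1.
  rewrite exchange_big mulr_sumr; apply: eq_bigr => x _.
  by rewrite -mulr_sumr IH mulrCA.
rewrite exchange_big mulr_sumr; apply: eq_bigr => j _.
by rewrite -mulr_sumr IH mulrCA.
Qed.

Lemma sum_expected_queries_mem Out (a : alg R n 'I_k Out) D :
  \sum_(I in Sf) expected_queries a D (fun j => j \in I) = N%:R * expected_queries a D predT.
Proof.
elim: a => [ o | i f IH | m w f IH] /=; first by rewrite big1 ?mulr0.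
  rewrite big_split mulrDr /=; congr (_ + _).
    rewrite mulr1 -(sum_mem_indicator i).
    by apply: eq_bigr => I _; case: (i \in I).
  rewrite exchange_big mulr_sumr; apply: eq_bigr => x _.
  by rewrite -mulr_sumr IH mulrCA.
rewrite exchange_big mulr_sumr; apply: eq_bigr => j _.
by rewrite -mulr_sumr IH mulrCA.
Qed.

End Averaging.

Definition uniform_alg (R : numFieldType) n O Out (X : finType) (S : {set X})
  (f : X -> alg R n O Out) : alg R n O Out :=
  Rand #|S| (fun _ => #|S|%:R^-1) (fun j => f (enum_val j)).

Section UniformAlg.
Variables (R : numFieldType) (n : nat) (O Out : Type) (X : finType).
Variables (S : {set X}) (f : X -> alg R n O Out).

Lemma uniform_alg_wf :
  (0 < #|S|)%N -> {in S, forall x, alg_wf (f x)} -> alg_wf (uniform_alg S f).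
Proof.
move=> S_gt0 wf; split=> [_|]; first by rewrite invr_ge0 ler0n.
split=> [|j]; last by apply: wf; exact: enum_valP.
by rewrite sumr_const card_ord -[_ *+ #|S|]mulr_natr mulVf // pnatr_eq0 -lt0n.
Qed.

Lemma qbound_uniform_alg (Q : pred O) (t : nat) :
  {in S, forall x, qbound (f x) Q t} -> qbound (uniform_alg S f) Q t.
Proof. by move=> h j; apply: h; exact: enum_valP. Qed.

Lemma prob_out_uniform_alg D (g : pred Out) :
  prob_out (uniform_alg S f) D g = #|S|%:R^-1 * \sum_(x in S) prob_out (f x) D g.
Proof. by rewrite /= -mulr_sumr [in RHS]big_enum_val. Qed.

End UniformAlg.

(* Oracle [true] stands for P2, oracle [false] for P1, and the answer [true]
   for "alternative". *)
Fixpoint collapse (R : Type) n k (I : {set 'I_k}) (c : nat)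
  (a : alg R n 'I_k 'I_k) : alg R n bool bool :=
  match a with
  | Ret o => Ret (o \in I)
  | Samp i f =>
      if i \in I then
        if c is c'.+1 then Samp true (fun x => collapse I c' (f x)) else Ret true
      else Samp false (fun x => collapse I c (f x))
  | Rand m w f => Rand m w (fun j => collapse I c (f j))
  end.

Lemma mean_affine_le (R : realFieldType) m (q u v s : 'I_m -> R) (d : R) :
  (forall j, 0 <= q j) -> \sum_(j < m) q j = 1 ->
  (forall j, 1 - u j - v j / d <= s j) ->
  1 - \sum_(j < m) q j * u j - (\sum_(j < m) q j * v j) / d <= \sum_(j < m) q j * s j.
Proof.
move=> q_ge0 q1 h; apply: le_trans (ler_sum _ (fun j _ => ler_wpM2l (q_ge0 j) (h j))).
rewrite [leRHS](eq_bigr (fun j => q j - q j * u j - q j * v j / d)) => [|j _].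
  by rewrite !sumrB q1 mulr_suml.
by rewrite !mulrBr mulr1 mulrA.
Qed.

(* Inductive step of the Markov bound [prob_out_collapse_null]: one more
   sample from [true] uses up one unit of the budget. *)
Lemma budget_step (R : realFieldType) (p e C s : R) :
  0 <= p -> 0 <= e -> 0 < C -> 0 <= s ->
  1 - p - e / C <= s -> 1 - p - (1 + e) / (C + 1) <= s.
Proof.
move=> p_ge0 e_ge0 C_gt0 s_ge0 h.
have C1_gt0 : 0 < C + 1 by rewrite addr_gt0.
have [le_eC|lt_Ce] := lerP e C.
  apply: le_trans h; rewrite lerD2l lerN2 ler_pdivrMr // mulrAC ler_pdivlMr //.
  nra.
apply: le_trans s_ge0.
have : 1 <= (1 + e) / (C + 1) by rewrite ler_pdivlMr // mul1r addrC lerD2l ltW.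
lra.
Qed.

Section Collapse.
Variables (n k : nat) (I : {set 'I_k}).

Lemma collapse_wf (R : numDomainType) (c : nat) (a : alg R n 'I_k 'I_k) :
  alg_wf a -> alg_wf (collapse I c a).
Proof.
elim: a c => [ o | i f IH | m w f IH] c /=; first by [].
  by case: (i \in I); case: c => [|c] //= wf x; exact: IH.
by move=> [w_ge0 [w1 wf]]; split=> //; split=> // j; exact: IH.
Qed.

Lemma qbound_collapse_true (R : Type) (c : nat) (a : alg R n 'I_k 'I_k) :
  qbound (collapse I c a) (pred1 true) c.
Proof.
elim: a c => [ o | i f IH | m w f IH] c /=; [by [] | | by move=> j; exact: IH].
case: (i \in I) => /= [|x]; last exact: IH.
by case: c => [|c] //=; split=> // x; exact: IH.
Qed.

Lemma qbound_collapse_false (R : Type) (c t : nat) (a : alg R n 'I_k 'I_k) :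
  qbound a predT t -> qbound (collapse I c a) (pred1 false) t.
Proof.
elim: a c t => [ o | i f IH | m w f IH] c t /=; [by [] | | by move=> h j; exact: IH].
move=> [t_gt0 h]; case: (i \in I) => /=; last by split=> // x; exact: IH.
by case: c => [|c] //= x; apply: IH; apply: qbound_le (h x); exact: leq_pred.
Qed.

Variables (R : realFieldType) (Q : bool -> 'I_n -> R).
Hypothesis hQ : forall b, is_dist (Q b).

Let env_ge0 i x : 0 <= Q (i \in I) x. Proof. by case: (hQ (i \in I)). Qed.

Lemma prob_out_le_collapse (c : nat) (a : alg R n 'I_k 'I_k) :
  alg_wf a ->
  prob_out a (fun i => Q (i \in I)) (fun j => j \in I)
  <= prob_out (collapse I c a) Q (fun b => b).
Proof.
elim: a c => [ o | i f IH | m w f IH] c /=; first by case: (o \in I).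
  move=> wf; have [Q_ge0 Q1] := hQ (i \in I).
  case: (i \in I) in Q_ge0 Q1 * => /=; [case: c => [|c] /= |].
  - by apply: convex_comb_le => // x; exact: prob_out_le1.
  - by apply: ler_sum => x _; apply: ler_wpM2l => //; exact: IH.
  - by apply: ler_sum => x _; apply: ler_wpM2l => //; exact: IH.
move=> [w_ge0 [w1 wf]].
by apply: ler_sum => j _; apply: ler_wpM2l => //; exact: IH.
Qed.

Lemma prob_out_collapse_null (c : nat) (a : alg R n 'I_k 'I_k) :
  alg_wf a ->
  1 - prob_out a (fun i => Q (i \in I)) (fun j => j \in I)
    - expected_queries a (fun i => Q (i \in I)) (fun j => j \in I) / c.+1%:R
  <= prob_out (collapse I c a) Q (fun b => ~~ b).
Proof.
elim: a c => [ o | i f IH | m w f IH] c /=.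
- by move=> _; rewrite mul0r subr0; case: (o \in I); rewrite /= ?subrr ?subr0.
- move=> wf; have [Q_ge0 Q1] := hQ (i \in I).
  case: (i \in I) in Q_ge0 Q1 * => /=; last first.
    by rewrite add0r; apply: mean_affine_le => // x; exact: IH.
  have Pt_ge0 : 0 <= \sum_(x < n) Q true x * prob_out (f x) (fun i => Q (i \in I)) (fun j => j \in I).
    by apply: sumr_ge0 => x _; rewrite mulr_ge0 // (prob_out_ge0 _ (wf x) env_ge0).
  have E_ge0 : 0 <= \sum_(x < n) Q true x * expected_queries (f x) (fun i => Q (i \in I)) (fun j => j \in I).
    by apply: sumr_ge0 => x _; rewrite mulr_ge0 // (expected_queries_ge0 _ (wf x) env_ge0).
  case: c => [|c] /=; first by rewrite divr1; lra.
  rewrite -[c.+2%:R]natr1; apply: budget_step => //.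
  + apply: sumr_ge0 => x _; apply: mulr_ge0 => //.
    by apply: prob_out_ge0 => [|b y]; [exact: collapse_wf | case: (hQ b)].
  + by apply: mean_affine_le => // x; exact: IH.
- by move=> [w_ge0 [w1 wf]]; apply: mean_affine_le => // j; exact: IH.
Qed.

End Collapse.

Definition draws (k r : nat) : {set {set 'I_k}} := [set I : {set 'I_k} | #|I| == r].

Lemma card_draws_mem_eq (k r : nat) (o o' : 'I_k) :
  #|[set I in draws k r | o \in I]| = #|[set I in draws k r | o' \in I]|.
Proof.
pose swap (J : {set 'I_k}) := [set tperm o o' x | x in J].
have swapK : involutive swap.
  by move=> J; rewrite /swap -imset_comp (eq_imset _ (tpermK o o')) imset_id.
rewrite -(card_imset _ (inv_inj swapK)) (can_imset_pre _ swapK).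
apply: eq_card => J; rewrite !inE.
rewrite /swap card_imset; last exact: perm_inj.
by rewrite -{1}(tpermR o o') mem_imset //; exact: perm_inj.
Qed.

Lemma card_draws_mem_mul (k r : nat) (o : 'I_k) :
  (k * #|[set I in draws k r | o \in I]| = #|draws k r| * r)%N.
Proof.
have -> : (#|draws k r| * r = \sum_(I in draws k r) #|I|)%N.
  by rewrite -sum_nat_const; apply: eq_bigr => I; rewrite inE => /eqP.
have -> : (\sum_(I in draws k r) #|I| =
            \sum_(I in draws k r) \sum_(o' : 'I_k) (o' \in I : nat))%N.
  by apply: eq_bigr => I _; rewrite -sum1_card big_mkcond.
rewrite exchange_big -[k in (k * _)%N]card_ord -sum_nat_const.
apply: eq_bigr => o' _; rewrite (card_draws_mem_eq r o o') -sum1_card.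
rewrite (eq_bigl (fun I => (I \in draws k r) && (o' \in I))) => [|I]; last by rewrite inE.
by rewrite big_mkcondr.
Qed.

Lemma card_draws_gt0 (k r : nat) : (r <= k)%N -> (0 < #|draws k r|)%N.
Proof. by move=> le_rk; rewrite card_draws card_ord bin_gt0. Qed.

Lemma card_draws_mem_ratio (R : numFieldType) (k r : nat) (o : 'I_k) :
  (r <= k)%N ->
  #|[set I in draws k r | o \in I]|%:R / #|draws k r|%:R = r%:R / k%:R :> R.
Proof.
move=> le_rk; have k_gt0 : (0 < k)%N by apply: leq_ltn_trans (ltn_ord o).
apply/eqP; rewrite eqr_div ?pnatr_eq0 -?lt0n ?card_draws_gt0 // -!natrM eqr_nat.
by rewrite mulnC card_draws_mem_mul mulnC.
Qed.

Lemma measurable_prob_out d (Om : measurableType d) (R : realType) n O Out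
  (a : alg R n O Out) (D : Om -> O -> 'I_n -> R) (g : pred Out) :
  (forall i x, measurable_fun setT (fun w => D w i x)) ->
  measurable_fun setT (fun w => prob_out a (D w) g).
Proof.
move=> D_meas; elim: a => [ o | i f IH | m w f IH] /=; first exact: measurable_cst.
  by apply: measurable_sum => x; exact: measurable_realfun.measurable_funM.
apply: measurable_sum => j.
by apply: measurable_realfun.measurable_funM => //; exact: measurable_cst.
Qed.

Lemma probability_integral_ge d (Om : measurableType d) (R : realType)
  (mu : probability Om R) (f : Om -> R) (c : R) :
  0 <= c -> measurable_fun setT f -> (forall w, 0 <= f w) ->
  {ae mu, forall w, c <= f w} -> (c%:E <= \int[mu]_w (f w)%:E)%E.
Proof.
move=> c_ge0 f_meas f_ge0 c_le_f.
have -> : c%:E = (\int[mu]_w cst c%:E w)%E.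
  by rewrite integral_cst // [X in (_ * X)%E](_ : _ = 1%E) ?mule1 //; exact: probability_setT.
apply: ae_ge0_le_integral => //.
- by move=> w _; rewrite lee_fin.
- exact/measurable_realfun.measurable_EFinP.
- by apply: filterS c_le_f => w c_le _; rewrite lee_fin.
Qed.

Lemma null_success_ge (R : realFieldType) (r k T e b : R) :
  0 <= r -> 0 < k -> 0 < b -> 0 <= e <= T ->
  60 * r <= k -> 60 * (r * T) <= b * k -> 9 / 10 <= 1 - r / k * (1 + e / b).
Proof.
move=> r_ge0 k_gt0 b_gt0 /andP[e_ge0 le_eT] le_rk le_rTbk.
have rk_le : r / k <= 1 / 60.
  by rewrite ler_pdivrMr // mulrAC ler_pdivlMr //; lra.
have reb_le : r / k * (e / b) <= 1 / 60.
  apply: le_trans (_ : r / k * (T / b) <= _).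
    by apply: ler_wpM2l; [rewrite divr_ge0 // ltW | rewrite ler_wpM2r // invr_ge0 ltW].
  have -> : r / k * (T / b) = r * T / (b * k).
    by field; rewrite !lt0r_neq0.
  by rewrite ler_pdivrMr ?mulr_gt0 //; lra.
rewrite mulrDr mulr1; lra.
Qed.

Definition reduction (R : numFieldType) n k (r T : nat) (A : alg R n 'I_k 'I_k) :
  alg R n bool bool :=
  uniform_alg (draws k r) (fun I => collapse I (60 * r * T %/ k) A).

Section Reduction.
Variables (R : realFieldType) (n k r T : nat) (A : alg R n 'I_k 'I_k).
Hypotheses (k_gt0 : (0 < k)%N) (le_rk : (60 * r <= k)%N).
Hypotheses (A_wf : alg_wf A) (A_T : qbound A predT T).

Let budget := (60 * r * T %/ k)%N.

Let r_le_k : (r <= k)%N.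
Proof. by rewrite (leq_trans _ le_rk) // leq_pmull. Qed.

Lemma reduction_wf : alg_wf (reduction r T A).
Proof. by apply: uniform_alg_wf (card_draws_gt0 r_le_k) _ => I _; exact: collapse_wf. Qed.

Lemma qbound_reduction_false : qbound (reduction r T A) (pred1 false) T.
Proof. by apply: qbound_uniform_alg => I _; exact: qbound_collapse_false. Qed.

Lemma qbound_reduction_true : qbound (reduction r T A) (pred1 true) budget.
Proof. by apply: qbound_uniform_alg => I _; exact: qbound_collapse_true. Qed.

Lemma reduction_null (p : 'I_n -> R) :
  is_dist p -> 9 / 10 <= prob_out (reduction r T A) (fun _ => p) (fun b => ~~ b).
Proof.
move=> p_dist.
pose N := #|[set I in draws k r | Ordinal k_gt0 \in I]|.
have card_mem o : #|[set I in draws k r | o \in I]| = N by exact: card_draws_mem_eq.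
have S_gt0 : 0 < #|draws k r|%:R :> R by rewrite ltr0n (card_draws_gt0 r_le_k).
set e := expected_queries A (fun _ => p) predT.
have e_ge0 : 0 <= e by apply: expected_queries_ge0 => // _; case: p_dist.
have le_eT : e <= T%:R by apply: expected_queries_le.
have sum_null : \sum_(I in draws k r) (1 - prob_out A (fun _ => p) (fun j => j \in I)
      - expected_queries A (fun _ => p) (fun j => j \in I) / budget.+1%:R)
    = #|draws k r|%:R - N%:R - N%:R * e / budget.+1%:R.
  rewrite !sumrB sumr_const -mulr_suml (sum_prob_out_mem card_mem).
  by rewrite (sum_expected_queries_mem card_mem) prob_outT // mulr1.
have null_I (I : {set 'I_k}) : 1 - prob_out A (fun _ => p) (fun j => j \in I)
      - expected_queries A (fun _ => p) (fun j => j \in I) / budget.+1%:R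
    <= prob_out (collapse I budget A) (fun _ => p) (fun b => ~~ b).
  exact: (@prob_out_collapse_null _ _ I _ (fun _ => p) (fun _ => p_dist) budget _ A_wf).
rewrite /reduction prob_out_uniform_alg.
have Sinv_ge0 : 0 <= #|draws k r|%:R^-1 :> R by rewrite invr_ge0 ltW.
apply: le_trans (ler_wpM2l Sinv_ge0 (ler_sum _ (fun I _ => null_I I))).
rewrite sum_null.
have b_gt0 : 0 < budget.+1%:R :> R by rewrite ltr0n.
set b : R := budget.+1%:R in b_gt0 *.
have -> : #|draws k r|%:R^-1 * (#|draws k r|%:R - N%:R - N%:R * e / b)
    = 1 - N%:R / #|draws k r|%:R * (1 + e / b) :> R.
  by field; rewrite !lt0r_neq0.
have le_rk' : 60 * r%:R <= k%:R :> R by rewrite -natrM ler_nat.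
have le_rTbk : 60 * (r%:R * T%:R) <= b * k%:R.
  by rewrite /b -!natrM ler_nat mulnA ltnW // ltn_ceil.
have e_range : 0 <= e <= T%:R by rewrite e_ge0 le_eT.
have k_pos : 0 < k%:R :> R by rewrite ltr0n.
by rewrite card_draws_mem_ratio //; exact: null_success_ge (ler0n _ r) k_pos b_gt0 e_range le_rk' le_rTbk.
Qed.

Lemma reduction_alt (Q : bool -> 'I_n -> R) :
  (forall b, is_dist (Q b)) ->
  (forall I : {set 'I_k}, #|I| = r ->
     9 / 10 <= prob_out A (fun i => Q (i \in I)) (fun j => j \in I)) ->
  9 / 10 <= prob_out (reduction r T A) Q (fun b => b).
Proof.
move=> Q_dist A_correct.
rewrite /reduction prob_out_uniform_alg ler_pdivlMl ?ltr0n ?(card_draws_gt0 r_le_k) //.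
have -> : #|draws k r|%:R * (9 / 10) = \sum_(I in draws k r) (9 / 10 : R).
  by rewrite sumr_const -(mulr_natl (9 / 10 : R)).
apply: ler_sum => I; rewrite inE => /eqP I_r.
exact: le_trans (A_correct I I_r) (prob_out_le_collapse I Q_dist _ A_wf).
Qed.

End Reduction.

Theorem lemmaD1 (R : realType) (n k r T : nat) (eps : R)
  (hk : (60 <= k)%N) (hr1 : (1 <= r)%N) (hrk : (60 * r <= k)%N)
  (heps : 0 < eps <= 1)
  (d0 : measure_display) (Om0 : measurableType d0) (mu0 : probability Om0 R)
  (P : Om0 -> 'I_n -> R)
  (hP : forall w, is_dist (P w))
  (hPm : forall x, measurable_fun setT (fun w => P w x))
  (d1 : measure_display) (Om1 : measurableType d1) (mu1 : probability Om1 R)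
  (P1 P2 : Om1 -> 'I_n -> R)
  (hP1 : forall w, is_dist (P1 w)) (hP2 : forall w, is_dist (P2 w))
  (hP1m : forall x, measurable_fun setT (fun w => P1 w x))
  (hP2m : forall x, measurable_fun setT (fun w => P2 w x))
  (hsep : {ae mu1, forall w, eps <= dTV (P1 w) (P2 w)})
  (A : alg R n 'I_k 'I_k) (hA : alg_wf A) (hAT : qbound A predT T)
  (hAc : {ae mu1, forall w, forall I : {set 'I_k}, #|I| = r ->
           9 / 10 <= prob_out A (fun i => if i \in I then P2 w else P1 w)
                                (fun j => j \in I)}) :
  exists A' : alg R n bool bool,
    alg_wf A' /\
    qbound A' (pred1 false) T /\
    qbound A' (pred1 true) ((60 * r * T) %/ k) /\
    ((9 / 10)%:E <= \int[mu0]_w (prob_out A' (fun _ => P w) (fun b => ~~ b))%:E)%E /\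
    ((9 / 10)%:E <= \int[mu1]_w
        (prob_out A' (fun b => if b then P2 w else P1 w) (fun b => b))%:E)%E.
Proof.
have k_gt0 : (0 < k)%N by apply: leq_trans hk.
have A'_wf := reduction_wf T hrk hA.
exists (reduction r T A); split=> //; split; first exact: qbound_reduction_false.
split; first exact: qbound_reduction_true.
split; apply: probability_integral_ge => //.
- exact: measurable_prob_out.
- by move=> w; apply: prob_out_ge0 => // _ x; case: (hP w).
- by apply: aeW => w; exact: reduction_null.
- by apply: measurable_prob_out => -[].
- by move=> w; apply: prob_out_ge0 => // -[] x; [case: (hP2 w) | case: (hP1 w)].
- apply: filterS hAc => w A_correct.
  by apply: reduction_alt => // -[]; [exact: hP2 | exact: hP1].
Qed.
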